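(* Let $A$ be a group, $H\leq A$ a subgroup, and let $G:=\langle A,t\mid t^{-1}ht=h\ \ \forall h\in H\rangle$ be the special HNN extension of $A$ amalgamating $H$. Let $\mathcal{C}$ be a class of groups that contains a root class $\mathcal{R}$. Suppose that (1) $\mathcal{C}$ is closed under subgroups and finite direct products; (2) every $\mathcal{R}$-by-$\mathcal{C}$ group belongs to $\mathcal{C}$; (3) for every group in $\mathcal{C}$ there is a group in $\mathcal{R}$ of the same cardinality. Then $G$ is residually $\mathcal{C}$ if and only if $A$ is residually $\mathcal{C}$ and $H$ is closed in the pro-$\mathcal{C}$ topology of $A$.
   Context: A class of groups is a family of groups closed under isomorphism. A group $G$ is residually $\mathcal{C}$ if for every $g\in G\setminus\{e\}$ there exist $C\in\mathcal{C}$ and a surjective homomorphism $\varphi\colon G\to C$ with $\varphi(g)\neq e$. A root class is a non-trivial class $\mathcal{R}$ closed under subgroups and finite direct products satisfying the Gruenberg condition: for any chain $K\trianglelefteq H\trianglelefteq G$ with $G/H, H/K\in\mathcal{R}$ there is $L\trianglelefteq G$ with $L\subseteq K$ and $G/L\in\mathcal{R}$. A group is $\mathcal{A}$-by-$\mathcal{B}$ if it has a normal subgroup in $\mathcal{A}$ with quotient in $\mathcal{B}$. The pro-$\mathcal{C}$ topology on a group $A$ is the group topology having as a basis of neighbourhoods of the identity the family $\mathcal{B}=\{N\trianglelefteq A\mid A/N\in\mathcal{C}\}$ (the cosets of these subgroups form a basis). A subgroup $H\leq A$ is closed in it iff $H=\bigcap_{N\in\mathcal{B}}HN$, equivalently for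 every $a\in A\setminus H$ there is a surjection $\varphi\colon A\to C\in\mathcal{C}$ with $\varphi(a)\notin\varphi(H)$. *)

From Stdlib Require Import ProofIrrelevance.

Record group : Type := Group {
  carrier :> Type;
  gmul : carrier -> carrier -> carrier;
  gone : carrier;
  ginv : carrier -> carrier;
  gmulA : forall x y z, gmul x (gmul y z) = gmul (gmul x y) z;
  gmul1l : forall x, gmul gone x = x;
  gmulVl : forall x, gmul (ginv x) x = gone }.

Arguments gmul {g}. Arguments gone {g}. Arguments ginv {g}.

Definition is_hom (G K : group) (f : G -> K) : Prop :=
  forall x y, f (gmul x y) = gmul (f x) (f y).
Definition surj {X Y : Type} (f : X -> Y) : Prop := forall y, exists x, f x = y.
Definition inj {X Y : Type} (f : X -> Y) : Prop := forall x y, f x = f y -> x = y.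
Definition isomorphic (G K : group) : Prop :=
  exists f : G -> K, is_hom G K f /\ inj f /\ surj f.

Definition gclass := group -> Prop.
Definition iso_closed (C : gclass) : Prop :=
  forall G K, isomorphic G K -> C G -> C K.

Definition is_subgroup (G : group) (S : G -> Prop) : Prop :=
  S gone /\ (forall x y, S x -> S y -> S (gmul x y)) /\ (forall x, S x -> S (ginv x)).

Definition is_normal (G : group) (N : G -> Prop) : Prop :=
  is_subgroup G N /\ forall x g, N x -> N (gmul (gmul (ginv g) x) g).

Section Sub.
Variables (G : group) (S : G -> Prop) (HS : is_subgroup G S).
Definition sub_mul (a b : {x : G | S x}) : {x : G | S x} :=
  exist _ (gmul (proj1_sig a) (proj1_sig b))
    (proj1 (proj2 HS) _ _ (proj2_sig a) (proj2_sig b)).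
Definition sub_one : {x : G | S x} := exist _ gone (proj1 HS).
Definition sub_inv (a : {x : G | S x}) : {x : G | S x} :=
  exist _ (ginv (proj1_sig a)) (proj2 (proj2 HS) _ (proj2_sig a)).
Lemma sub_mulA : forall x y z, sub_mul x (sub_mul y z) = sub_mul (sub_mul x y) z.
Proof. intros [x ?] [y ?] [z ?]; apply subset_eq_compat; apply gmulA. Qed.
Lemma sub_mul1l : forall x, sub_mul sub_one x = x.
Proof. intros [x ?]; apply subset_eq_compat; apply gmul1l. Qed.
Lemma sub_mulVl : forall x, sub_mul (sub_inv x) x = sub_one.
Proof. intros [x ?]; apply subset_eq_compat; apply gmulVl. Qed.
Definition sub_group : group :=
  Group {x : G | S x} sub_mul sub_one sub_inv sub_mulA sub_mul1l sub_mulVl.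
End Sub.

Section Prod.
Variables G K : group.
Definition prod_mul (a b : G * K) : G * K := (gmul (fst a) (fst b), gmul (snd a) (snd b)).
Lemma prod_mulA : forall x y z, prod_mul x (prod_mul y z) = prod_mul (prod_mul x y) z.
Proof. intros [] [] []; unfold prod_mul; simpl; now rewrite !gmulA. Qed.
Lemma prod_mul1l : forall x, prod_mul (gone, gone) x = x.
Proof. intros []; unfold prod_mul; simpl; now rewrite !gmul1l. Qed.
Lemma prod_mulVl : forall x, prod_mul (ginv (fst x), ginv (snd x)) x = (gone, gone).
Proof. intros []; unfold prod_mul; simpl; now rewrite !gmulVl. Qed.
Definition prod_group : group :=
  Group (G * K) prod_mul (gone, gone) (fun x => (ginv (fst x), ginv (snd x)))
    prod_mulA prod_mul1l prod_mulVl.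
End Prod.

(* G/N belongs to C: N is the kernel of a surjective homomorphism onto a group of C *)
Definition quotient_in (C : gclass) (G : group) (N : G -> Prop) : Prop :=
  exists (Q : group) (f : G -> Q),
    C Q /\ is_hom G Q f /\ surj f /\ forall x, N x <-> f x = gone.

Definition subgroup_closed (C : gclass) : Prop :=
  forall G S (HS : is_subgroup G S), C G -> C (sub_group G S HS).
Definition product_closed (C : gclass) : Prop :=
  forall G K, C G -> C K -> C (prod_group G K).

Definition gruenberg (R : gclass) : Prop :=
  forall (G : group) (H : G -> Prop) (HH : is_normal G H)
         (K : sub_group G H (proj1 HH) -> Prop),
    is_normal (sub_group G H (proj1 HH)) K ->
    quotient_in R G H ->
    quotient_in R (sub_group G H (proj1 HH)) K ->
    exists L : G -> Prop, is_normal G L /\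
      (forall x (hx : H x), L x -> K (exist _ x hx)) /\
      (forall x, L x -> H x) /\
      quotient_in R G L.

Definition nontrivial_class (R : gclass) : Prop :=
  exists G : group, R G /\ exists x : G, x <> gone.

Definition root_class (R : gclass) : Prop :=
  nontrivial_class R /\ iso_closed R /\ subgroup_closed R /\ product_closed R /\
  gruenberg R.

Definition by_class (A B : gclass) (G : group) : Prop :=
  exists N (HN : is_normal G N), A (sub_group G N (proj1 HN)) /\ quotient_in B G N.

Definition residually (C : gclass) (G : group) : Prop :=
  forall g : G, g <> gone ->
    exists (K : group) (f : G -> K), C K /\ is_hom G K f /\ surj f /\ f g <> gone.

(* H closed in the pro-C topology: H = intersection of HN over N normal with A/N in C *)
Definition pro_closed (C : gclass) (A : group) (H : A -> Prop) : Prop :=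
  forall a : A,
    (forall N, is_normal A N -> quotient_in C A N ->
       exists h n, H h /\ N n /\ a = gmul h n) -> H a.

Definition same_card (X Y : group) : Prop :=
  exists f : X -> Y, inj f /\ surj f.

(* G with i : A -> G and t is the special HNN extension <A, t | t^-1 h t = h, h in H>,
   characterised by its universal property (determines G up to isomorphism). *)
Definition is_special_HNN (A : group) (H : A -> Prop) (G : group) (i : A -> G) (t : G)
  : Prop :=
  is_hom A G i /\
  (forall h, H h -> gmul (gmul (ginv t) (i h)) t = i h) /\
  (forall (K : group) (f : A -> K) (s : K),
     is_hom A K f -> (forall h, H h -> gmul (gmul (ginv s) (f h)) s = f h) ->
     exists phi : G -> K, is_hom G K phi /\ (forall a, phi (i a) = f a) /\ phi t = s) /\
  (forall (K : group) (phi psi : G -> K), is_hom G K phi -> is_hom G K psi ->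
     (forall a, phi (i a) = psi (i a)) -> phi t = psi t -> forall g, phi g = psi g).

(* Necessity: a retraction [G -> A] makes [i] injective, so [A] is residually [C].  If
   [a] is not in [H], then [t] and [i a] do not commute (already in [bool_group wr A], with
   [t] the lamp lit on [H]); a [C]-quotient of [G] keeping them apart restricts to a
   [C]-quotient [A / N] with [a] outside [H N], so [H] is closed.

   Sufficiency: write [g <> 1] in Britton-reduced form [i a0 * t^s1 * i a1 * ...] and
   take [psi : A -> X] in [C] sending every [a_k] outside [psi H] when [a_k] is outside
   [H], and [a0] to a nontrivial element when [a0 <> 1].  Map [G] to [B wr X], sending
   [t] to a lamp [beta o coset_rep] constant on the cosets [psi H * x].  The value of the
   image of [g] at [1] is the value under [beta] of the reduced word of cosets visited by
   [g], and free groups are residually [R] (by the same lamp construction, with elements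
   of large order in [R] for powers of a single letter), so some [beta] into [B] in [R]
   makes it nontrivial.  Finally [B wr X] is in [C]: [R] is closed under unrestricted
   wreath products (Gruenberg's condition), hence by the cardinality hypothesis [B ^ X]
   is in [R], and [B wr X] is [R]-by-[C]. *)

From Stdlib Require Import ProofIrrelevance FunctionalExtensionality ClassicalEpsilon
  Classical PropExtensionality Bool List Lia PeanoNat.
Import ListNotations.

Section GroupLemmas.
Variable G : group.
Implicit Types x y z : G.

Lemma gmulV x : gmul x (ginv x) = gone.
Proof.
  rewrite <- (gmul1l _ (gmul x (ginv x))), <- (gmulVl _ (ginv x)) at 1.
  rewrite <- gmulA, (gmulA _ (ginv x) x), gmulVl, gmul1l. apply gmulVl.
Qed.

Lemma gmul1r x : gmul x gone = x.
Proof. now rewrite <- (gmulVl _ x), gmulA, gmulV, gmul1l. Qed.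

Lemma ginvK x : ginv (ginv x) = x.
Proof. now rewrite <- (gmul1r (ginv (ginv x))), <- (gmulVl _ x), gmulA, gmulVl, gmul1l. Qed.

Lemma ginv1 : ginv (@gone G) = gone.
Proof. rewrite <- (gmul1r (ginv gone)). apply gmulVl. Qed.

Lemma gmulKV x y : gmul (gmul x (ginv y)) y = x.
Proof. now rewrite <- gmulA, gmulVl, gmul1r. Qed.

Lemma gmulK x y : gmul (gmul x y) (ginv y) = x.
Proof. now rewrite <- gmulA, gmulV, gmul1r. Qed.

Lemma gmulKl x y : gmul (ginv x) (gmul x y) = y.
Proof. now rewrite gmulA, gmulVl, gmul1l. Qed.

Lemma gmulVKl x y : gmul x (gmul (ginv x) y) = y.
Proof. now rewrite gmulA, gmulV, gmul1l. Qed.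

Lemma gmulI x y z : gmul x z = gmul y z -> x = y.
Proof. intros E. now rewrite <- (gmulK x z), E, gmulK. Qed.

Lemma gmulIl x y z : gmul z x = gmul z y -> x = y.
Proof. intros E. now rewrite <- (gmulKl z x), E, gmulKl. Qed.

Lemma gmul_eq1 x y : gmul x (ginv y) = gone -> x = y.
Proof. intros E. now rewrite <- (gmulKV x y), E, gmul1l. Qed.

Lemma ginvM x y : ginv (gmul x y) = gmul (ginv y) (ginv x).
Proof.
  apply (gmulI _ _ (gmul x y)).
  now rewrite gmulVl, <- gmulA, gmulKl, gmulVl.
Qed.

Lemma gmul_idem x : gmul x x = x -> x = gone.
Proof. intros E. now rewrite <- (gmulKl x x), E, gmulVl. Qed.
End GroupLemmas.

Section Homomorphisms.
Variables (G K : group) (f : G -> K).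
Hypothesis Hf : is_hom G K f.

Lemma hom1 : f gone = gone.
Proof. apply gmul_idem. now rewrite <- Hf, gmul1l. Qed.

Lemma homV x : f (ginv x) = ginv (f x).
Proof. apply gmul_eq1. now rewrite ginvK, <- Hf, gmulVl, hom1. Qed.

Definition kernel : G -> Prop := fun x => f x = gone.

Lemma kernel_normal : is_normal G kernel.
Proof.
  unfold kernel. split; [split; [|split]|].
  - exact hom1.
  - intros x y Ex Ey. now rewrite Hf, Ex, Ey, gmul1l.
  - intros x Ex. now rewrite homV, Ex, ginv1.
  - intros x g Ex. now rewrite !Hf, Ex, gmul1r, <- Hf, gmulVl, hom1.
Qed.

Lemma kernel_trivial_inj : (forall x, f x = gone -> x = gone) -> inj f.
Proof.
  intros Hk x y E. apply gmul_eq1, Hk. now rewrite Hf, homV, E, gmulV.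
Qed.

Definition himage : K -> Prop := fun k => exists a, f a = k.

Lemma himage_subgroup : is_subgroup K himage.
Proof.
  split; [|split].
  - exists gone. exact hom1.
  - intros x y [a <-] [b <-]. exists (gmul a b). apply Hf.
  - intros x [a <-]. exists (ginv a). apply homV.
Qed.

Lemma bij_hom_isomorphic : inj f -> surj f -> isomorphic K G.
Proof.
  intros If Sf.
  destruct (choice (fun y x => f x = y) Sf) as [g Hg].
  exists g. split; [|split].
  - intros x y. apply If. now rewrite Hf, !Hg.
  - intros x y E. now rewrite <- (Hg x), <- (Hg y), E.
  - intros x. exists (f x). apply If, Hg.
Qed.
End Homomorphisms.

Arguments hom1 {G K f}. Arguments homV {G K f}. Arguments kernel {G K}.
Arguments kernel_normal {G K f}. Arguments kernel_trivial_inj {G K f}.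
Arguments himage {G K}. Arguments himage_subgroup {G K f}.
Arguments bij_hom_isomorphic {G K f}.

Lemma is_hom_comp (G K L : group) (f : G -> K) (g : K -> L) :
  is_hom G K f -> is_hom K L g -> is_hom G L (fun x => g (f x)).
Proof. intros Hf Hg x y. now rewrite Hf, Hg. Qed.

Lemma is_hom_const1 (G K : group) : is_hom G K (fun _ => gone).
Proof. intros x y. symmetry. apply gmul1l. Qed.

Lemma is_hom_pair (G K1 K2 : group) (f1 : G -> K1) (f2 : G -> K2) :
  is_hom G K1 f1 -> is_hom G K2 f2 -> is_hom G (prod_group K1 K2) (fun x => (f1 x, f2 x)).
Proof. intros H1 H2 x y. cbn. unfold prod_mul. cbn. now rewrite H1, H2. Qed.

Lemma kernel_quotient_in (C : gclass) (G K : group) (f : G -> K) :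
  is_hom G K f -> surj f -> C K -> quotient_in C G (kernel f).
Proof. intros Hf Sf CK. exists K, f. repeat split; auto. Qed.

Lemma corestrict_in (C : gclass) (G K : group) (f : G -> K) (Hf : is_hom G K f) :
  subgroup_closed C -> C K ->
  exists (Q : group) (q : G -> Q),
    C Q /\ is_hom G Q q /\ surj q /\ forall x, q x = gone <-> f x = gone.
Proof.
  intros SC CK. exists (sub_group K (himage f) (himage_subgroup Hf)).
  exists (fun a => exist _ (f a) (ex_intro _ a eq_refl)).
  split; [now apply SC|split; [|split]].
  - intros x y. apply subset_eq_compat, Hf.
  - intros [k [a E]]. exists a. now apply subset_eq_compat.
  - intros x. split; intro E.
    + exact (f_equal (@proj1_sig _ _) E).
    + now apply subset_eq_compat.
Qed.

Lemma residually_inj_hom (C : gclass) (A G : group) (f : A -> G) :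
  subgroup_closed C -> is_hom A G f -> inj f -> residually C G -> residually C A.
Proof.
  intros SC Hf If RG a Ha.
  destruct (RG (f a)) as [K [k [CK [Hk [_ Nk]]]]].
  { intros E. apply Ha, If. now rewrite E, (hom1 Hf). }
  destruct (corestrict_in C A K (fun x => k (f x)) (is_hom_comp _ _ _ _ _ Hf Hk) SC CK)
    as [Q [q [CQ [Hq [Sq Kq]]]]].
  exists Q, q. repeat split; auto. intros E. now apply Nk, Kq.
Qed.

Lemma kernel_quotient_in_image (C : gclass) (A K : group) (f : A -> K) :
  subgroup_closed C -> is_hom A K f -> C K -> quotient_in C A (kernel f).
Proof.
  intros SC Hf CK. destruct (corestrict_in C A K f Hf SC CK) as [Q [q [CQ [Hq [Sq Kq]]]]].
  exists Q, q. repeat split; auto; apply Kq.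
Qed.

Section Words.
Variables (T : Type) (B : group).

Definition letter_eval (beta : T -> B) (x : T * bool) : B :=
  if snd x then beta (fst x) else ginv (beta (fst x)).
Definition word_eval (beta : T -> B) (w : list (T * bool)) : B :=
  fold_right (fun x acc => gmul (letter_eval beta x) acc) gone w.

Lemma word_eval_ext (beta beta' : T -> B) w :
  (forall x, beta x = beta' x) -> word_eval beta w = word_eval beta' w.
Proof. intros E. now replace beta with beta' by (symmetry; now apply functional_extensionality). Qed.
End Words.

Arguments letter_eval {T B}. Arguments word_eval {T B}.

Lemma word_eval_map T U (B : group) (beta : U -> B) (h : T -> U) w :
  word_eval (fun x => beta (h x)) w = word_eval beta (map (fun x => (h (fst x), snd x)) w).
Proof. induction w as [|[x s] w IH]; cbn; [reflexivity|]. unfold word_eval in *. now rewrite IH. Qed.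

Lemma word_eval_pair T (B1 B2 : group) (b1 : T -> B1) (b2 : T -> B2) w :
  @word_eval T (prod_group B1 B2) (fun x => (b1 x, b2 x)) w = (word_eval b1 w, word_eval b2 w).
Proof.
  induction w as [|[x s] w IH]; [reflexivity|].
  transitivity (prod_mul B1 B2 (@letter_eval T (prod_group B1 B2) (fun x => (b1 x, b2 x)) (x, s))
                  (word_eval b1 w, word_eval b2 w)).
  - now rewrite <- IH.
  - now destruct s.
Qed.

(* The unrestricted wreath product [B wr Q], with [Q] acting on [B ^ Q] by left
   translation. *)
Section Wreath.
Variables B Q : group.

Definition wr_mul (p q : (Q -> B) * Q) : (Q -> B) * Q :=
  (fun x => gmul (fst p x) (fst q (gmul (ginv (snd p)) x)), gmul (snd p) (snd q)).
Definition wr_one : (Q -> B) * Q := (fun _ => gone, gone).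
Definition wr_inv (p : (Q -> B) * Q) : (Q -> B) * Q :=
  (fun x => ginv (fst p (gmul (snd p) x)), ginv (snd p)).

Lemma wr_mulA x y z : wr_mul x (wr_mul y z) = wr_mul (wr_mul x y) z.
Proof.
  destruct x as [F a], y as [F' b], z as [F'' c]. unfold wr_mul; cbn.
  f_equal; [|apply gmulA]. apply functional_extensionality; intro x.
  now rewrite gmulA, ginvM, gmulA.
Qed.

Lemma wr_mul1l x : wr_mul wr_one x = x.
Proof.
  destruct x as [F a]. unfold wr_mul; cbn. rewrite gmul1l. f_equal.
  apply functional_extensionality; intro x. now rewrite ginv1, !gmul1l.
Qed.

Lemma wr_mulVl x : wr_mul (wr_inv x) x = wr_one.
Proof.
  destruct x as [F a]. unfold wr_mul, wr_inv, wr_one; cbn. rewrite gmulVl. f_equal.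
  apply functional_extensionality; intro x. now rewrite ginvK, gmulVl.
Qed.

Definition wr : group := Group ((Q -> B) * Q) wr_mul wr_one wr_inv wr_mulA wr_mul1l wr_mulVl.

Definition wr_top (q : Q) : wr := (fun _ => gone, q).

Lemma wr_top_hom : is_hom Q wr wr_top.
Proof.
  intros x y. unfold wr_top. cbn. unfold wr_mul. cbn. f_equal.
  apply functional_extensionality; intro. now rewrite gmul1l.
Qed.

Lemma wr_snd_hom : is_hom wr Q snd.
Proof. now intros x y. Qed.

Lemma wr_snd_surj : surj (@snd (Q -> B) Q).
Proof. intros q. now exists (wr_top q). Qed.

Definition wr_base : wr -> Prop := kernel (G := wr) (K := Q) snd.

Lemma wr_base_normal : is_normal wr wr_base.
Proof. exact (kernel_normal wr_snd_hom). Qed.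

Definition wr_base_ev1 (p : sub_group wr wr_base (proj1 wr_base_normal)) : B :=
  fst (proj1_sig p) gone.

Lemma wr_base_ev1_hom : is_hom _ B wr_base_ev1.
Proof.
  intros [[F a] ha] [[F' b] hb]. unfold wr_base, kernel in ha, hb. cbn in ha, hb. subst.
  unfold wr_base_ev1. cbn. unfold wr_mul. cbn. now rewrite ginv1, gmul1l.
Qed.

Lemma wr_base_ev1_surj : surj wr_base_ev1.
Proof. intros b. now unshelve eexists (exist _ ((fun _ => b), gone) _). Qed.

(* Conjugating by [wr_top z] moves the value at [z] to [1]. *)
Lemma wr_normal_trivial (L : wr -> Prop) :
  is_normal wr L -> (forall x, L x -> wr_base x) -> (forall x, L x -> fst x gone = gone) ->
  forall x, L x -> x = gone.
Proof.
  intros [_ HL] LB L1 [F a] Lx.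
  assert (Ha : a = gone) by exact (LB _ Lx). subst a.
  cbn. unfold wr_one. f_equal. apply functional_extensionality; intro z.
  specialize (L1 _ (HL _ (wr_top z) Lx)). cbn in L1. unfold wr_mul, wr_inv in L1. cbn in L1.
  now rewrite !ginv1, !gmul1l, !gmul1r, ginvK in L1.
Qed.

Inductive wr_gen := Top (q : Q) | Lamp (s : bool).

Section Lamps.
Variable sigma : Q -> B.

Definition lamp : wr := (sigma, gone).

Definition wr_gen_eval (x : wr_gen) : wr :=
  match x with Top q => wr_top q | Lamp s => if s then lamp else ginv lamp end.

Definition wr_eval (l : list wr_gen) : wr :=
  fold_right (fun x acc => gmul (wr_gen_eval x) acc) gone l.

Fixpoint lamp_walk (p : Q) (l : list wr_gen) : list (Q * bool) :=
  match l with
  | [] => []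
  | Top q :: r => lamp_walk (gmul p q) r
  | Lamp s :: r => (p, s) :: lamp_walk p r
  end.

Lemma wr_mul_top (F : Q -> B) p q : gmul ((F, p) : wr) (wr_top q) = (F, gmul p q).
Proof.
  cbn. unfold wr_mul. cbn. f_equal.
  apply functional_extensionality; intro. apply gmul1r.
Qed.

Lemma wr_mul_lamp (F : Q -> B) p s :
  gmul ((F, p) : wr) (wr_gen_eval (Lamp s)) =
  ((fun x => gmul (F x) (letter_eval (fun q => sigma (gmul (ginv q) x)) (p, s))), p).
Proof.
  destruct s; cbn; unfold wr_mul, wr_inv; cbn; rewrite ?ginv1; f_equal; try apply gmul1r.
  apply functional_extensionality; intro. now rewrite gmul1l.
Qed.

Lemma wr_eval_fst : forall l (F : Q -> B) (p : Q) x,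
  fst (gmul ((F, p) : wr) (wr_eval l)) x =
  gmul (F x) (word_eval (fun q => sigma (gmul (ginv q) x)) (lamp_walk p l)).
Proof.
  induction l as [|[q|s] r IH]; intros F p x.
  - cbn. now rewrite !gmul1r.
  - unfold wr_eval. cbn [fold_right wr_gen_eval]. rewrite gmulA, wr_mul_top. apply IH.
  - unfold wr_eval. cbn [fold_right]. rewrite gmulA, wr_mul_lamp. fold (wr_eval r).
    rewrite IH, <- gmulA. reflexivity.
Qed.

Lemma wr_eval_fst1 p l :
  fst (gmul (wr_top p) (wr_eval l)) gone = word_eval (fun q => sigma (ginv q)) (lamp_walk p l).
Proof.
  unfold wr_top. rewrite wr_eval_fst, gmul1l.
  apply word_eval_ext. intros q. now rewrite gmul1r.
Qed.
End Lamps.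
End Wreath.

Arguments wr_top {B Q}. Arguments Top {Q}. Arguments Lamp {Q}.
Arguments lamp_walk {Q}.

Section RootClass.
Variable R : gclass.
Hypothesis RR : root_class R.

Lemma root_class_wr B Z : R B -> R Z -> R (wr B Z).
Proof.
  destruct RR as [_ [IR [_ [_ GR]]]]. intros RB RZ.
  destruct (GR (wr B Z) (wr_base B Z) (wr_base_normal B Z) (kernel (wr_base_ev1 B Z))
              (kernel_normal (wr_base_ev1_hom B Z)))
    as [L [HL [LK [LB [Q [f [RQ [Hf [Sf Kf]]]]]]]]].
  - exact (kernel_quotient_in R _ _ _ (wr_snd_hom B Z) (wr_snd_surj B Z) RZ).
  - exact (kernel_quotient_in R _ _ _ (wr_base_ev1_hom B Z) (wr_base_ev1_surj B Z) RB).
  - assert (L1 : forall x, L x -> x = gone).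
    { apply wr_normal_trivial; auto. intros x Lx. exact (LK x (LB x Lx) Lx). }
    apply (IR Q); [|exact RQ]. apply (bij_hom_isomorphic Hf); [|exact Sf].
    apply (kernel_trivial_inj Hf). intros x Ex. now apply L1, Kf.
Qed.

Fixpoint gpow {G : group} (b : G) (n : nat) : G :=
  match n with 0 => gone | S n => gmul b (gpow b n) end.

Lemma gpowD (G : group) (b : G) m n : gpow b (m + n) = gmul (gpow b m) (gpow b n).
Proof. induction m; cbn; [now rewrite gmul1l|now rewrite IHm, gmulA]. Qed.

Lemma gpowSr (G : group) (b : G) n : gpow b (S n) = gmul (gpow b n) b.
Proof. replace (S n) with (n + 1) by lia. rewrite gpowD. cbn. now rewrite gmul1r. Qed.

Lemma gpow_hom (G K : group) (f : G -> K) (b : G) n :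
  is_hom G K f -> f (gpow b n) = gpow (f b) n.
Proof. intros Hf. induction n; cbn; [apply (hom1 Hf)|now rewrite Hf, IHn]. Qed.

Definition order_gt (G : group) (b : G) (N : nat) : Prop :=
  forall j, 1 <= j <= N -> gpow b j <> gone.

(* The [j]-th power of [(delta, b)] has top coordinate [b ^ j] and value [b] at [1] as
   long as [b ^ i <> 1] for [0 < i < j]. *)
Lemma wr_order_double (B : group) (b : B) N :
  order_gt B b N -> exists w : wr B B, order_gt (wr B B) w (2 * N).
Proof.
  intros Ob.
  set (delta := fun y : B => if excluded_middle_informative (y = gone) then b else gone).
  set (w := (delta, b) : wr B B).
  assert (Hsnd : forall j, snd (gpow w j) = gpow b j)
    by (intro j; apply (gpow_hom (wr B B) B snd), wr_snd_hom).
  assert (Hfst : forall j, 1 <= j -> (forall i, 0 < i < j -> gpow b i <> gone) ->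
            fst (gpow w j) gone = b).
  { induction j as [|j IH]; intros Hj Hi; [lia|].
    rewrite gpowSr. cbn. unfold wr_mul. cbn [fst snd]. rewrite Hsnd, gmul1r.
    destruct j as [|j].
    - cbn. unfold delta. rewrite ginv1, gmul1l.
      now destruct (excluded_middle_informative (gone = gone)).
    - rewrite IH by (lia || (intros i Hi'; apply Hi; lia)).
      unfold delta. destruct (excluded_middle_informative (ginv (gpow b (S j)) = gone)) as [E|E].
      + exfalso. apply (Hi (S j)); [lia|]. now rewrite <- (ginvK _ (gpow b (S j))), E, ginv1.
      + apply gmul1r. }
  exists w. intros j Hj E.
  destruct (classic (gpow b j = gone)) as [Ej|Ej].
  - assert (Hi : forall i, 0 < i < j -> gpow b i <> gone).
    { intros i Hi Ei. destruct (Nat.le_gt_cases i N).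
      - exact (Ob i ltac:(lia) Ei).
      - assert (N < j) by (destruct (Nat.le_gt_cases j N); [exfalso; exact (Ob j ltac:(lia) Ej)|lia]).
        apply (Ob (j - i)); [lia|].
        replace j with (i + (j - i)) in Ej by lia. now rewrite gpowD, Ei, gmul1l in Ej. }
    assert (F1 := Hfst j (proj1 Hj) Hi). rewrite E in F1. cbn in F1.
    apply (Ob 1); [lia|]. cbn. now rewrite gmul1r.
  - apply Ej. now rewrite <- Hsnd, E.
Qed.

Lemma root_class_large_order n : exists B, R B /\ exists b : B, order_gt B b n.
Proof.
  assert (P2 : forall k, exists B, R B /\ exists b : B, order_gt B b (2 ^ k)).
  { induction k as [|k [B [RB [b Ob]]]].
    - destruct RR as [[B [RB [x Hx]]] _]. exists B. split; [exact RB|]. exists x.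
      intros j Hj. cbn in Hj. replace j with 1 by lia. cbn. now rewrite gmul1r.
    - destruct (wr_order_double B b _ Ob) as [w Ow].
      exists (wr B B). split; [now apply root_class_wr|]. exists w.
      now rewrite Nat.pow_succ_r'. }
  destruct (P2 n) as [B [RB [b Ob]]]. exists B. split; [exact RB|]. exists b.
  intros j Hj. apply Ob. split; [lia|].
  assert (n < 2 ^ n) by (apply Nat.pow_gt_lin_r; lia). lia.
Qed.
End RootClass.

Lemma wr_base_iso (B X Z : group) (e : X -> Z) : inj e -> surj e ->
  isomorphic (sub_group (wr B Z) (wr_base B Z) (proj1 (wr_base_normal B Z)))
             (sub_group (wr B X) (wr_base B X) (proj1 (wr_base_normal B X))).
Proof.
  intros Ie Se. destruct (choice (fun z x => e x = z) Se) as [einv He].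
  exists (fun p => exist (wr_base B X) ((fun x => fst (proj1_sig p) (e x)), gone) eq_refl).
  split; [|split].
  - intros [[F a] ha] [[F' b] hb]. unfold wr_base, kernel in ha, hb; cbn in ha, hb; subst.
    apply subset_eq_compat. cbn. unfold wr_mul; cbn. rewrite !ginv1, gmul1l.
    f_equal. apply functional_extensionality; intro x. now rewrite !gmul1l.
  - intros [[F a] ha] [[F' b] hb] E. unfold wr_base, kernel in ha, hb; cbn in ha, hb; subst.
    apply subset_eq_compat. apply (f_equal (fun p => fst (proj1_sig p))) in E. cbn in E.
    f_equal. apply functional_extensionality; intro z. rewrite <- (He z).
    exact (f_equal (fun h => h (einv z)) E).
  - intros [[F' a] ha]. unfold wr_base, kernel in ha; cbn in ha; subst.
    exists (exist (wr_base B Z) ((fun z => F' (einv z)), gone) eq_refl).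
    apply subset_eq_compat. cbn. f_equal. apply functional_extensionality; intro x.
    f_equal. apply Ie, He.
Qed.

(* For [Z] in [R] of the cardinality of [X], the base [B ^ X] of [B wr X] is isomorphic
   to the base of [B wr Z], which lies in [R]; so [B wr X] is [R]-by-[C]. *)
Lemma wr_in_class (C R : gclass) (B X : group) :
  root_class R ->
  (forall X, by_class R C X -> C X) ->
  (forall X, C X -> exists Y, R Y /\ same_card X Y) ->
  R B -> C X -> C (wr B X).
Proof.
  intros RR BC CARD RB CX.
  destruct (CARD X CX) as [Z [RZ [e [Ie Se]]]].
  assert (RR' := RR). destruct RR' as [_ [IR [SR _]]].
  apply BC. exists (wr_base B X), (wr_base_normal B X). split.
  - apply (IR _ _ (wr_base_iso B X Z e Ie Se)), SR. now apply root_class_wr.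
  - exact (kernel_quotient_in C _ _ _ (wr_snd_hom B X) (wr_snd_surj B X) CX).
Qed.

Definition cancels {T} (x y : T * bool) : Prop := fst x = fst y /\ snd y = negb (snd x).

Fixpoint reduced {T} (w : list (T * bool)) : Prop :=
  match w with x :: ((y :: _) as r) => ~ cancels x y /\ reduced r | _ => True end.

Lemma reduced_tail {T} (x : T * bool) r : reduced (x :: r) -> reduced r.
Proof. destruct r; cbn; tauto. Qed.

Lemma reduced_app_r {T} (u v : list (T * bool)) : reduced (u ++ v) -> reduced v.
Proof. induction u as [|x u IH]; cbn; auto. intros Hr. apply IH. exact (reduced_tail _ _ Hr). Qed.

Lemma reduced_app_l {T} (u v : list (T * bool)) : reduced (u ++ v) -> reduced u.
Proof.
  induction u as [|x [|y u] IH]; cbn; auto.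
  intros [Hxy Hr]. split; [exact Hxy|exact (IH Hr)].
Qed.

Fixpoint prefixes {X} (l : list X) : list (list X) :=
  match l with [] => [[]] | x :: r => [] :: map (cons x) (prefixes r) end.

Fixpoint infixes {X} (l : list X) : list (list X) :=
  match l with [] => [[]] | x :: r => prefixes (x :: r) ++ infixes r end.

Lemma in_prefixes {X} (u v : list X) : In u (prefixes (u ++ v)).
Proof. induction u; cbn; [destruct v; cbn; auto|right; now apply in_map]. Qed.

Lemma in_infixes {X} (a u b : list X) : In u (infixes (a ++ u ++ b)).
Proof.
  induction a as [|x a IH]; cbn.
  - destruct u as [|z u]; cbn.
    + destruct b; cbn; now left.
    + right. apply in_or_app. left. apply in_map, in_prefixes.
  - right. apply in_or_app. now right.
Qed.

Section RootAssignments.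
Variable R : gclass.
Hypothesis RR : root_class R.

Lemma root_assignment_list T (P : list (T * bool) -> Prop) ws :
  (forall u, In u ws -> P u -> exists B, R B /\ exists beta : T -> B, word_eval beta u <> gone) ->
  exists B, R B /\ exists beta : T -> B, forall u, In u ws -> P u -> word_eval beta u <> gone.
Proof.
  induction ws as [|u ws IH]; intros Hs.
  - destruct RR as [[B [RB _]] _]. exists B. split; [exact RB|]. now exists (fun _ => gone).
  - destruct IH as [B1 [R1 [b1 H1]]]; [intros v Hv; apply Hs; now right|].
    destruct (classic (P u)) as [Pu|Pu].
    + destruct (Hs u (or_introl eq_refl) Pu) as [B2 [R2 [b2 H2]]].
      exists (prod_group B1 B2). split; [destruct RR as [_ [_ [_ [PR _]]]]; now apply PR|].
      exists (fun x => (b1 x, b2 x)). intros v Hv Pv. rewrite word_eval_pair. intros E.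
      injection E as E1 E2. destruct Hv as [<-|Hv]; [exact (H2 E2)|exact (H1 v Hv Pv E1)].
    + exists B1. split; [exact R1|]. exists b1. intros v [<-|Hv] Pv; [contradiction|].
      exact (H1 v Hv Pv).
Qed.

Lemma reduced_constant_letter {T} : forall w (x : T * bool), reduced (x :: w) ->
  (forall y, In y (x :: w) -> fst y = fst x) -> forall y, In y (x :: w) -> y = x.
Proof.
  induction w as [|z w IH]; intros x Rw Hf y Hy.
  - now destruct Hy as [<-|[]].
  - destruct Rw as [Nc Rr].
    assert (Ez : z = x).
    { destruct z as [zl zs], x as [xl xs].
      assert (zl = xl) by (apply (Hf (zl, zs)); cbn; auto). subst.
      destruct xs, zs; cbn in *; auto; exfalso; apply Nc; now split. }
    subst z. destruct Hy as [<-|Hy]; [reflexivity|]. apply (IH x Rr); [|exact Hy].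
    intros y' Hy'. apply Hf. now right.
Qed.

Lemma word_eval_constant {T} (B : group) (beta : T -> B) b w :
  (forall y, In y w -> letter_eval beta y = b) -> word_eval beta w = gpow b (length w).
Proof.
  induction w as [|y w IH]; intros Hw; cbn; [reflexivity|].
  rewrite (Hw y (or_introl eq_refl)). unfold word_eval in IH. rewrite IH; [reflexivity|].
  intros; apply Hw; now right.
Qed.

(* Such a word is [c ^ n] or [c ^ -n] with [0 < n]: send [c] to an element of order
   larger than [n]. *)
Lemma root_assignment_power T (x : T * bool) w :
  reduced (x :: w) -> (forall y, In y (x :: w) -> fst y = fst x) ->
  exists B, R B /\ exists beta : T -> B, word_eval beta (x :: w) <> gone.
Proof.
  intros Rw Hw. destruct x as [c s].
  destruct (root_class_large_order R RR (length ((c, s) :: w))) as [B [RB [b Ob]]].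
  exists B. split; [exact RB|]. exists (fun _ => if s then b else ginv b).
  rewrite (word_eval_constant B _ b); [apply Ob; cbn; lia|].
  intros y Hy. rewrite (reduced_constant_letter w (c, s) Rw Hw y Hy).
  unfold letter_eval. cbn. destruct s; [reflexivity|apply ginvK].
Qed.

Section LampCode.
Variables (T : Type) (c : T) (B Q : group) (alpha : T -> Q).

Definition lamp_code (x : T * bool) : wr_gen Q :=
  if excluded_middle_informative (fst x = c) then Lamp (snd x) else Top (letter_eval alpha x).

Lemma lamp_code_c s : lamp_code (c, s) = Lamp s.
Proof. unfold lamp_code. cbn. now destruct (excluded_middle_informative (c = c)). Qed.

Lemma lamp_code_other l s : l <> c -> lamp_code (l, s) = Top (letter_eval alpha (l, s)).
Proof. intros E. unfold lamp_code. cbn. now destruct (excluded_middle_informative (l = c)). Qed.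

Lemma lamp_walk_code_length : forall w (p : Q),
  length (lamp_walk p (map lamp_code w)) <= length w /\
  ((exists x, In x w /\ fst x <> c) -> length (lamp_walk p (map lamp_code w)) < length w).
Proof.
  induction w as [|[l s] r IH]; intros p; cbn.
  - split; [lia|]. now intros [x [[] _]].
  - destruct (excluded_middle_informative (l = c)) as [->|E];
      [rewrite lamp_code_c|rewrite lamp_code_other by exact E]; cbn.
    + destruct (IH p) as [I1 I2]. split; [lia|].
      intros [x [[<-|Hx] Hn]]; [now contradiction Hn|].
      enough (length (lamp_walk p (map lamp_code r)) < length r) by lia.
      apply I2. now exists x.
    + destruct (IH (gmul p (letter_eval alpha (l, s)))) as [I1 I2]. split; lia.
Qed.

(* If every nonempty [c]-free infix of [w] is nontrivial under [alpha], the lamp walk of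
   [w] is again reduced: two cancelling consecutive lamps would enclose a [c]-free infix
   of value [1].  The second conjunct locates the head of the walk, for the induction. *)
Lemma lamp_walk_code_reduced : forall w (p : Q), reduced w ->
  (forall a u b, w = a ++ u ++ b -> u <> [] -> (forall x, In x u -> fst x <> c) ->
     word_eval alpha u <> gone) ->
  reduced (lamp_walk p (map lamp_code w)) /\
  (forall q s rest, lamp_walk p (map lamp_code w) = (q, s) :: rest ->
     exists u r, w = u ++ (c, s) :: r /\ (forall x, In x u -> fst x <> c) /\
       q = gmul p (word_eval alpha u)).
Proof.
  induction w as [|[l s] r IH]; intros p Rw Sw; [split; [exact I|discriminate]|].
  assert (Rr : reduced r) by exact (reduced_tail _ _ Rw).
  assert (Sr : forall a u b, r = a ++ u ++ b -> u <> [] -> (forall x, In x u -> fst x <> c) ->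
                 word_eval alpha u <> gone)
    by (intros a u b E; apply (Sw ((l, s) :: a) u b); now rewrite E).
  cbn [map]. destruct (excluded_middle_informative (l = c)) as [->|El].
  - rewrite lamp_code_c. cbn [lamp_walk]. destruct (IH p Rr Sr) as [IR IHd]. split.
    + destruct (lamp_walk p (map lamp_code r)) as [|[q s'] rest] eqn:Ew; [exact I|].
      split; [|exact IR].
      destruct (IHd q s' rest eq_refl) as [u [r' [Er [Nu Eq]]]].
      intros [Cq Cs]. cbn in Cq, Cs.
      destruct u as [|x u].
      * cbn in Er. subst r. destruct Rw as [Nc _]. now apply Nc.
      * apply (Sw [(c, s)] (x :: u) ((c, s') :: r')); [cbn; now rewrite Er|discriminate|exact Nu|].
        apply (gmulIl _ _ _ p). now rewrite <- Eq, gmul1r.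
    + intros q s' rest E. injection E as <- <- _. exists [], r. cbn.
      split; [reflexivity|split; [now intros x []|symmetry; apply gmul1r]].
  - rewrite lamp_code_other by exact El. cbn [lamp_walk].
    destruct (IH (gmul p (letter_eval alpha (l, s))) Rr Sr) as [IR IHd]. split; [exact IR|].
    intros q s' rest E. destruct (IHd q s' rest E) as [u [r' [Er [Nu Eq]]]].
    exists ((l, s) :: u), r'. split; [cbn; now rewrite Er|split].
    + intros x [<-|Hx]; [exact El|exact (Nu x Hx)].
    + rewrite Eq. cbn. apply eq_sym, gmulA.
Qed.

Variable sigma : Q -> B.

Definition lamp_assignment (l : T) : wr B Q :=
  if excluded_middle_informative (l = c) then lamp B Q sigma else wr_top (alpha l).

Lemma word_eval_lamp_assignment w :
  word_eval lamp_assignment w = wr_eval B Q sigma (map lamp_code w).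
Proof.
  induction w as [|[l s] w IH]; [reflexivity|].
  cbn [map]. unfold word_eval, wr_eval in *. cbn [fold_right]. rewrite IH. f_equal.
  unfold letter_eval, lamp_assignment. cbn.
  destruct (excluded_middle_informative (l = c)) as [->|E].
  - rewrite lamp_code_c. now destruct s.
  - rewrite lamp_code_other by exact E. destruct s; [reflexivity|].
    cbn. unfold wr_inv, wr_top. cbn. f_equal. apply functional_extensionality; intro. apply ginv1.
Qed.
End LampCode.

(* Free groups are residually [R]: induction on the length of the reduced word [w].
   With [c] its first letter, the [c]-free infixes are shorter, so one [R]-assignment
   [alpha] separates them all; sending [c] to a lamp of [B wr Q] and the other letters to
   [alpha] reduces [w] to its lamp walk, a shorter reduced word over [Q]. *)
Theorem reduced_word_root_assignment T (w : list (T * bool)) :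
  w <> [] -> reduced w -> exists B, R B /\ exists beta : T -> B, word_eval beta w <> gone.
Proof.
  remember (length w) as n eqn:En. revert T w En.
  induction n as [n IHn] using (well_founded_induction Nat.lt_wf_0). intros T w -> Hn Rw.
  destruct w as [|[c s0] w1]; [contradiction|].
  destruct (classic (exists x, In x ((c, s0) :: w1) /\ fst x <> c)) as [Ex|Nx].
  2:{ apply root_assignment_power; [exact Rw|].
      intros y Hy. apply NNPP. intros Ny. apply Nx. now exists y. }
  set (w := (c, s0) :: w1) in *.
  destruct (root_assignment_list T
     (fun u => u <> [] /\ (forall x, In x u -> fst x <> c) /\ exists a b, w = a ++ u ++ b)
     (infixes w)) as [Q [RQ [alpha Ha]]].
  { intros u _ [Nu [Cu [a [b Eu]]]]. refine (IHn (length u) _ T u eq_refl Nu _).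
    - assert (length w = length a + length u + length b) by (rewrite Eu, !length_app; lia).
      enough (length u <> length w) by lia. intros Eq.
      assert (a = [] /\ b = []) as [-> ->] by (split; apply length_zero_iff_nil; lia).
      cbn in Eu. rewrite app_nil_r in Eu. apply (Cu (c, s0)); [rewrite <- Eu; now left|reflexivity].
    - rewrite Eu in Rw. exact (reduced_app_l _ _ (reduced_app_r _ _ Rw)). }
  set (w' := lamp_walk gone (map (lamp_code T c Q alpha) w)).
  destruct (lamp_walk_code_reduced T c Q alpha w gone Rw) as [Rw' _].
  { intros a u b E Nu Cu. apply Ha; [rewrite E; apply in_infixes|]. split; [|split]; eauto. }
  destruct (IHn (length w') ltac:(apply (lamp_walk_code_length T c Q alpha w gone), Ex) Q w' eq_refl)
    as [B [RB [beta' Hb]]]; [unfold w', w; cbn; now rewrite lamp_code_c|exact Rw'|].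
  exists (wr B Q). split; [now apply root_class_wr|].
  exists (lamp_assignment T c B Q alpha (fun y => beta' (ginv y))).
  rewrite word_eval_lamp_assignment. intros E. apply Hb.
  apply (f_equal (fun x => fst (gmul (wr_top gone) x) gone)) in E.
  rewrite wr_eval_fst1, gmul1r in E. etransitivity; [|exact E].
  apply word_eval_ext. intros q. now rewrite ginvK.
Qed.
End RootAssignments.

Section HNN.
Variables (A : group) (H : A -> Prop) (G : group) (i : A -> G) (t : G).
Hypothesis HH : is_subgroup A H.
Hypothesis HN : is_special_HNN A H G i t.

Lemma hnn_i_hom : is_hom A G i.
Proof. apply HN. Qed.

Lemma hnn_t_commute h : H h -> gmul (i h) t = gmul t (i h).
Proof.
  intros Hh. destruct HN as [_ [Ht _]].
  apply (gmulIl _ _ _ (ginv t)). now rewrite gmulKl, gmulA, Ht.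
Qed.

Lemma hnn_lift (K : group) (f : A -> K) (s : K) :
  is_hom A K f -> (forall h, H h -> gmul (f h) s = gmul s (f h)) ->
  exists phi : G -> K, is_hom G K phi /\ (forall a, phi (i a) = f a) /\ phi t = s.
Proof.
  intros Hf Hs. destruct HN as [_ [_ [UP _]]]. apply UP; [exact Hf|].
  intros h Hh. now rewrite <- gmulA, Hs, gmulKl.
Qed.

Lemma hnn_retraction : exists r : G -> A, is_hom G A r /\ forall a, r (i a) = a.
Proof.
  destruct (hnn_lift A (fun a => a) gone) as [r [Hr [Hri _]]].
  - now intros x y.
  - intros h _. now rewrite gmul1l, gmul1r.
  - now exists r.
Qed.

Lemma hnn_i_inj : inj i.
Proof.
  intros x y E. destruct hnn_retraction as [r [_ Hri]]. now rewrite <- (Hri x), E, Hri.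
Qed.

Definition tpow (s : bool) : G := if s then t else ginv t.

Definition hnn_letter_eval (x : A + bool) : G :=
  match x with inl a => i a | inr s => tpow s end.
Definition hnn_word_eval (l : list (A + bool)) : G :=
  fold_right (fun x acc => gmul (hnn_letter_eval x) acc) gone l.

Lemma hnn_word_eval_app l m : hnn_word_eval (l ++ m) = gmul (hnn_word_eval l) (hnn_word_eval m).
Proof.
  induction l as [|x l IH]; [cbn; now rewrite gmul1l|].
  unfold hnn_word_eval in *. cbn [app fold_right]. now rewrite IH, gmulA.
Qed.

Definition hnn_letter_inv (x : A + bool) : A + bool :=
  match x with inl a => inl (ginv a) | inr s => inr (negb s) end.

Lemma hnn_word_eval_inv l :
  hnn_word_eval (map hnn_letter_inv (rev l)) = ginv (hnn_word_eval l).
Proof.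
  induction l as [|x l IH]; [cbn; symmetry; apply ginv1|].
  cbn [rev]. rewrite map_app, hnn_word_eval_app, IH.
  unfold hnn_word_eval at 3. cbn [fold_right]. rewrite ginvM. cbn. rewrite gmul1r. f_equal.
  destruct x as [a|[|]]; cbn; [apply (homV hnn_i_hom)|reflexivity|symmetry; apply ginvK].
Qed.

(* The words form a subgroup containing [i A] and [t]; by uniqueness in the universal
   property, the inclusion of that subgroup is onto. *)
Lemma hnn_generated g : exists l, hnn_word_eval l = g.
Proof.
  set (S := fun g => exists l, hnn_word_eval l = g).
  assert (HS : is_subgroup G S).
  { split; [|split].
    - now exists [].
    - intros x y [l <-] [m <-]. exists (l ++ m). apply hnn_word_eval_app.
    - intros x [l <-]. exists (map hnn_letter_inv (rev l)). apply hnn_word_eval_inv. }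
  destruct (hnn_lift (sub_group G S HS) (fun a => exist S (i a) (ex_intro _ [inl a] (gmul1r _ _)))
             (exist S t (ex_intro _ [inr true] (gmul1r _ _)))) as [phi [Hp [Hpi Hpt]]].
  - intros x y. apply subset_eq_compat, hnn_i_hom.
  - intros h Hh. apply subset_eq_compat, hnn_t_commute, Hh.
  - destruct HN as [_ [_ [_ UQ]]].
    rewrite <- (UQ G (fun g => proj1_sig (phi g)) (fun g => g)) with (g := g);
      [apply proj2_sig| | | |].
    + intros x y. now rewrite Hp.
    + now intros x y.
    + intros a. now rewrite Hpi.
    + now rewrite Hpt.
Qed.

Fixpoint hnn_tail (l : list (bool * A)) : G :=
  match l with [] => gone | (s, a) :: r => gmul (tpow s) (gmul (i a) (hnn_tail r)) end.
Definition hnn_form (a0 : A) (l : list (bool * A)) : G := gmul (i a0) (hnn_tail l).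

Fixpoint hnn_collect (l : list (A + bool)) : A * list (bool * A) :=
  match l with
  | [] => (gone, [])
  | inl a :: r => (gmul a (fst (hnn_collect r)), snd (hnn_collect r))
  | inr s :: r => (gone, (s, fst (hnn_collect r)) :: snd (hnn_collect r))
  end.

Lemma hnn_collect_eval l :
  hnn_form (fst (hnn_collect l)) (snd (hnn_collect l)) = hnn_word_eval l.
Proof.
  unfold hnn_form. induction l as [|[a|s] r IH]; cbn.
  - now rewrite (hom1 hnn_i_hom), gmul1l.
  - now rewrite hnn_i_hom, <- gmulA, IH.
  - now rewrite (hom1 hnn_i_hom), gmul1l, IH.
Qed.

(* No pinch [t^s * i h * t^-s] with [h] in [H]. *)
Fixpoint britton_reduced (l : list (bool * A)) : Prop :=
  match l with
  | (s, a) :: (((s', _) :: _) as r) => (s' = negb s -> ~ H a) /\ britton_reduced r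
  | _ => True
  end.

Lemma hnn_pinch s a : H a -> gmul (gmul (tpow s) (i a)) (tpow (negb s)) = i a.
Proof.
  intros Ha. destruct s; cbn.
  - now rewrite <- (hnn_t_commute a Ha), gmulK.
  - now rewrite <- gmulA, (hnn_t_commute a Ha), gmulKl.
Qed.

Lemma hnn_reduce_step : forall l a0, britton_reduced l \/
  exists a0' l', length l' < length l /\ hnn_form a0' l' = hnn_form a0 l.
Proof.
  induction l as [|[s a] r IH]; intros a0; [now left|].
  destruct r as [|[s' b] r']; [now left|].
  destruct (classic (s' = negb s /\ H a)) as [[-> Ha]|Np].
  - right. exists (gmul (gmul a0 a) b), r'. split; [cbn; lia|].
    unfold hnn_form. cbn. rewrite !hnn_i_hom.
    rewrite (gmulA _ (tpow s)), (gmulA _ (gmul (tpow s) (i a))), hnn_pinch by exact Ha.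
    now rewrite !gmulA.
  - destruct (IH a) as [Hr|[a' [l' [Ll El]]]].
    + left. split; [|exact Hr]. intros Es Ha. now apply Np.
    + right. exists a0, ((s, a') :: l'). split; [cbn in *; lia|].
      unfold hnn_form in *. cbn. now rewrite El.
Qed.

Lemma hnn_britton_form g : exists a0 l, britton_reduced l /\ hnn_form a0 l = g.
Proof.
  destruct (hnn_generated g) as [w <-]. rewrite <- hnn_collect_eval.
  generalize (fst (hnn_collect w)) (snd (hnn_collect w)). intros a0 l.
  remember (length l) as n eqn:En. revert a0 l En.
  induction n as [n IHn] using (well_founded_induction Nat.lt_wf_0). intros a0 l ->.
  destruct (hnn_reduce_step l a0) as [Hr|[a' [l' [Ll El]]]].
  - now exists a0, l.
  - rewrite <- El. exact (IHn _ Ll a' l' eq_refl).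
Qed.

Lemma hnn_wr_hom (B Q : group) (psi : A -> Q) (sigma : Q -> B) :
  is_hom A Q psi -> (forall h x, H h -> sigma (gmul (psi h) x) = sigma x) ->
  exists phi : G -> wr B Q,
    is_hom G (wr B Q) phi /\ (forall a, phi (i a) = wr_top (psi a)) /\ phi t = lamp B Q sigma.
Proof.
  intros Hpsi Hsig. apply hnn_lift.
  - exact (is_hom_comp _ _ _ _ _ Hpsi (wr_top_hom B Q)).
  - intros h Hh. cbn. unfold wr_mul, wr_top, lamp. cbn. rewrite gmul1l, gmul1r. f_equal.
    apply functional_extensionality; intro x. rewrite gmul1l, gmul1r.
    rewrite <- (homV Hpsi). apply Hsig. now apply HH.
Qed.
End HNN.

Fixpoint hnn_code (A X : group) (psi : A -> X) (l : list (bool * A)) : list (wr_gen X) :=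
  match l with [] => [] | (s, a) :: r => Lamp s :: Top (psi a) :: hnn_code A X psi r end.

Lemma hnn_form_wr (A G : group) (i : A -> G) (t : G)
  (B X : group) (psi : A -> X) (sigma : X -> B) (phi : G -> wr B X) :
  is_hom G (wr B X) phi -> (forall a, phi (i a) = wr_top (psi a)) -> phi t = lamp B X sigma ->
  forall a0 l, phi (hnn_form A G i t a0 l) =
               gmul (wr_top (psi a0)) (wr_eval B X sigma (hnn_code A X psi l)).
Proof.
  intros Hphi Hpi Hpt a0 l. unfold hnn_form. rewrite Hphi, Hpi. f_equal.
  induction l as [|[s a] r IH]; cbn [hnn_tail]; [exact (hom1 Hphi)|].
  rewrite !Hphi, Hpi, IH. destruct s; cbn; [now rewrite Hpt|now rewrite (homV Hphi), Hpt].
Qed.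

Definition bool_group : group :=
  Group bool xorb false (fun b => b) (fun x y z => eq_sym (xorb_assoc x y z))
    xorb_false_l xorb_nilpotent.

Definition indicator {A : Type} (S : A -> Prop) (x : A) : bool :=
  if excluded_middle_informative (S x) then true else false.

Section Necessity.
Variables (A : group) (H : A -> Prop) (G : group) (i : A -> G) (t : G).
Hypothesis HH : is_subgroup A H.
Hypothesis HN : is_special_HNN A H G i t.

(* In [bool_group wr A], with [t] acting as the lamp [indicator H]: the two products
   [t * i a] and [i a * t] have values [indicator H a] and [indicator H 1] at [a]. *)
Lemma hnn_commute_t_mem a : gmul t (i a) = gmul (i a) t -> H a.
Proof.
  intros E.
  destruct (hnn_wr_hom A H G i t HH HN bool_group A (fun x => x) (indicator H))
    as [phi [Hphi [Hpi Hpt]]].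
  - now intros x y.
  - intros h x Hh. unfold indicator.
    destruct (excluded_middle_informative (H (gmul h x))) as [Hx|Hx],
      (excluded_middle_informative (H x)) as [Hx'|Hx']; try reflexivity; exfalso.
    + apply Hx'. rewrite <- (gmulKl _ h x). apply HH; [apply HH|]; assumption.
    + apply Hx. apply HH; assumption.
  - apply (f_equal (fun g => fst (phi g) a)) in E.
    rewrite !Hphi, Hpi, Hpt in E. cbn in E. unfold wr_mul in E. cbn in E.
    rewrite gmulVl, xorb_false_r in E. unfold indicator in E.
    destruct (excluded_middle_informative (H a)) as [Ha|Ha]; [exact Ha|].
    destruct (excluded_middle_informative (H gone)) as [_|N1]; [discriminate|].
    exfalso. apply N1, HH.
Qed.

Lemma residually_hnn_closed (C : gclass) :
  subgroup_closed C -> residually C G -> pro_closed C A H.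
Proof.
  intros SC RG a Ha. apply NNPP. intros Na.
  destruct (RG (gmul (gmul t (i a)) (ginv (gmul (i a) t)))) as [Q [q [CQ [Hq [_ Nq]]]]].
  { intros E. now apply Na, hnn_commute_t_mem, gmul_eq1. }
  assert (Hqi : is_hom A Q (fun x => q (i x))) by exact (is_hom_comp _ _ _ _ _ (hnn_i_hom _ _ _ _ _ HN) Hq).
  destruct (Ha (kernel (fun x => q (i x)))) as [h [n [Hh [Nn ->]]]].
  - exact (kernel_normal Hqi).
  - exact (kernel_quotient_in_image C A Q _ SC Hqi CQ).
  - apply Nq. rewrite Hq, (homV Hq), !Hq, (hnn_i_hom _ _ _ _ _ HN), !Hq, Nn, gmul1r.
    rewrite <- !Hq, (hnn_t_commute _ _ _ _ _ HN h Hh). apply gmulV.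
Qed.
End Necessity.

Definition image_set {A X : group} (psi : A -> X) (S : A -> Prop) : X -> Prop :=
  fun x => exists h, S h /\ psi h = x.

Lemma image_set_subgroup (A X : group) (psi : A -> X) (S : A -> Prop) :
  is_subgroup A S -> is_hom A X psi -> is_subgroup X (image_set psi S).
Proof.
  intros HS Hpsi. split; [|split].
  - exists gone. split; [apply HS|apply (hom1 Hpsi)].
  - intros x y [h [Hh <-]] [k [Hk <-]]. exists (gmul h k). split; [now apply HS|apply Hpsi].
  - intros x [h [Hh <-]]. exists (ginv h). split; [now apply HS|apply (homV Hpsi)].
Qed.

Section CosetRepresentatives.
Variables (X : group) (Y : X -> Prop).
Hypothesis HY : is_subgroup X Y.

Definition coset_rep (x : X) : X :=
  epsilon (inhabits gone) (fun r => exists y, Y y /\ r = gmul y x).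

Lemma coset_rep_spec x : exists y, Y y /\ coset_rep x = gmul y x.
Proof.
  unfold coset_rep. apply epsilon_spec.
  exists x, gone. split; [apply HY|symmetry; apply gmul1l].
Qed.

Lemma coset_rep_mul y x : Y y -> coset_rep (gmul y x) = coset_rep x.
Proof.
  intros Yy. unfold coset_rep. f_equal. apply functional_extensionality; intro r.
  apply propositional_extensionality. split.
  - intros [z [Yz ->]]. exists (gmul z y). split; [now apply HY|apply gmulA].
  - intros [z [Yz ->]]. exists (gmul z (ginv y)). split; [apply HY; auto; now apply HY|].
    now rewrite <- gmulA, gmulKl.
Qed.

Lemma coset_rep_eq x x' : coset_rep x = coset_rep x' -> exists y, Y y /\ x' = gmul y x.
Proof.
  intros E. destruct (coset_rep_spec x) as [y1 [Y1 E1]], (coset_rep_spec x') as [y2 [Y2 E2]].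
  exists (gmul (ginv y2) y1). split; [apply HY; [now apply HY|exact Y1]|].
  now rewrite <- gmulA, <- E1, E, E2, gmulKl.
Qed.
End CosetRepresentatives.

Definition coset_letters (X : group) (Y : X -> Prop) (w : list (X * bool)) : list (X * bool) :=
  map (fun x => (coset_rep X Y (ginv (fst x)), snd x)) w.

Section Sufficiency.
Variables (C R : gclass) (A : group) (H : A -> Prop).
Hypothesis HH : is_subgroup A H.
Hypothesis RR : root_class R.
Hypothesis RC : forall X, R X -> C X.
Hypothesis PC : product_closed C.
Hypothesis RA : residually C A.
Hypothesis CL : pro_closed C A H.

Definition separates (X : group) (psi : A -> X) (a : A) : Prop :=
  (~ H a -> ~ image_set psi H (psi a)) /\ (a <> gone -> psi a <> gone).

Lemma separates_pair_l (X1 X2 : group) (p1 : A -> X1) (p2 : A -> X2) a :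
  separates X1 p1 a -> separates (prod_group X1 X2) (fun x => (p1 x, p2 x)) a.
Proof.
  intros [S1 S2]. split.
  - intros Na [h [Hh E]]. injection E as E1 _. apply (S1 Na). now exists h.
  - intros Na E. injection E as E1 _. exact (S2 Na E1).
Qed.

Lemma separates_pair_r (X1 X2 : group) (p1 : A -> X1) (p2 : A -> X2) a :
  separates X2 p2 a -> separates (prod_group X1 X2) (fun x => (p1 x, p2 x)) a.
Proof.
  intros [S1 S2]. split.
  - intros Na [h [Hh E]]. injection E as _ E2. apply (S1 Na). now exists h.
  - intros Na E. injection E as _ E2. exact (S2 Na E2).
Qed.

Lemma trivial_hom_in_class : exists (X : group) (psi : A -> X), C X /\ is_hom A X psi.
Proof.
  destruct RR as [[X [RX _]] _]. exists X, (fun _ => gone). split; [now apply RC|].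
  apply is_hom_const1.
Qed.

(* Closedness of [H] gives a [C]-quotient [A / N] with [a] outside [H N]. *)
Lemma closed_avoiding_hom a : ~ H a ->
  exists (X : group) (psi : A -> X), C X /\ is_hom A X psi /\ ~ image_set psi H (psi a).
Proof.
  intros Na.
  assert (Nc : ~ forall N, is_normal A N -> quotient_in C A N ->
                 exists h n, H h /\ N n /\ a = gmul h n) by (intros F; exact (Na (CL a F))).
  apply not_all_ex_not in Nc. destruct Nc as [N Nc].
  apply imply_to_and in Nc. destruct Nc as [NN Nc].
  apply imply_to_and in Nc. destruct Nc as [[Q [f [CQ [Hf [Sf Kf]]]]] Nc].
  exists Q, f. split; [exact CQ|split; [exact Hf|]]. intros [h [Hh E]].
  apply Nc. exists h, (gmul (ginv h) a). split; [exact Hh|split].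
  - apply Kf. now rewrite Hf, (homV Hf), E, gmulVl.
  - now rewrite gmulVKl.
Qed.

Lemma separating_hom a : exists (X : group) (psi : A -> X), C X /\ is_hom A X psi /\ separates X psi a.
Proof.
  destruct trivial_hom_in_class as [X0 [p0 [C0 H0]]].
  assert (P1 : exists (X : group) (psi : A -> X), C X /\ is_hom A X psi /\
                 (~ H a -> ~ image_set psi H (psi a))).
  { destruct (classic (H a)) as [Ha|Na].
    - exists X0, p0. tauto.
    - destruct (closed_avoiding_hom a Na) as [X [psi [CX [Hpsi Av]]]]. now exists X, psi. }
  assert (P2 : exists (X : group) (psi : A -> X), C X /\ is_hom A X psi /\ (a <> gone -> psi a <> gone)).
  { destruct (classic (a = gone)) as [Ea|Na].
    - exists X0, p0. tauto.
    - destruct (RA a Na) as [K [f [CK [Hf [_ Nf]]]]]. now exists K, f. }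
  destruct P1 as [X1 [p1 [C1 [H1 S1]]]], P2 as [X2 [p2 [C2 [H2 S2]]]].
  exists (prod_group X1 X2), (fun x => (p1 x, p2 x)).
  split; [now apply PC|split; [now apply is_hom_pair|split]].
  - intros Na [h [Hh E]]. injection E as E1 _. apply (S1 Na). now exists h.
  - intros Na E. injection E as _ E2. exact (S2 Na E2).
Qed.

Lemma separating_hom_list (L : list A) :
  exists (X : group) (psi : A -> X), C X /\ is_hom A X psi /\ forall a, In a L -> separates X psi a.
Proof.
  induction L as [|a L [X1 [p1 [C1 [H1 S1]]]]].
  - destruct trivial_hom_in_class as [X [psi [CX Hpsi]]]. now exists X, psi.
  - destruct (separating_hom a) as [X2 [p2 [C2 [H2 S2]]]].
    exists (prod_group X1 X2), (fun x => (p1 x, p2 x)).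
    split; [now apply PC|split; [now apply is_hom_pair|]].
    intros b [<-|Hb]; [now apply separates_pair_r|apply separates_pair_l, S1, Hb].
Qed.

(* Consecutive letters [t^s] and [t^-s] around [a] would give equal coset representatives
   for [p^-1] and [(p * psi a)^-1], i.e. [psi a] in [psi H]. *)
Lemma coset_walk_reduced (X : group) (psi : A -> X) : is_hom A X psi ->
  forall l p, britton_reduced A H l -> (forall a, In a (map snd l) -> separates X psi a) ->
  reduced (coset_letters X (image_set psi H) (lamp_walk p (hnn_code A X psi l))).
Proof.
  intros Hpsi. pose proof (image_set_subgroup A X psi H HH Hpsi) as HY.
  induction l as [|[s a] r IH]; intros p Hr Hs; [exact I|].
  destruct r as [|[s' b] r']; [exact I|].
  destruct Hr as [Hn Hr]. split.
  - intros [Cr Cs]. cbn in Cr, Cs. apply (proj1 (Hs a (or_introl eq_refl)) (Hn Cs)).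
    destruct (coset_rep_eq X _ HY _ _ Cr) as [y [Yy Ey]].
    rewrite ginvM in Ey. apply gmulI in Ey.
    rewrite <- (ginvK _ (psi a)), Ey. now apply HY.
  - apply (IH (gmul p (psi a)) Hr). intros a' Ha'. apply Hs. now right.
Qed.

Lemma coset_walk_root_assignment (X : group) (psi : A -> X) a0 l :
  is_hom A X psi -> britton_reduced A H l -> (forall a, In a (map snd l) -> separates X psi a) ->
  exists B, R B /\ exists beta : X -> B, l <> [] ->
    word_eval beta (coset_letters X (image_set psi H) (lamp_walk (psi a0) (hnn_code A X psi l)))
      <> gone.
Proof.
  intros Hpsi Rl Sep. destruct l as [|x l'].
  - destruct RR as [[B [RB _]] _]. exists B. split; [exact RB|]. now exists (fun _ => gone).
  - destruct (reduced_word_root_assignment R RR X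
        (coset_letters X (image_set psi H) (lamp_walk (psi a0) (hnn_code A X psi (x :: l')))))
      as [B [RB [beta Hb]]]; [now destruct x|now apply coset_walk_reduced|].
    exists B. split; [exact RB|]. now exists beta.
Qed.
End Sufficiency.

Lemma residually_hnn (C R : gclass) (A : group) (H : A -> Prop) (G : group)
  (i : A -> G) (t : G) :
  is_subgroup A H -> is_special_HNN A H G i t -> root_class R ->
  (forall X, R X -> C X) -> subgroup_closed C -> product_closed C ->
  (forall X, by_class R C X -> C X) -> (forall X, C X -> exists Y, R Y /\ same_card X Y) ->
  residually C A -> pro_closed C A H -> residually C G.
Proof.
  intros HH HN RR RC SC PC BC CARD RA CL g Ng.
  destruct (hnn_britton_form A H G i t HN g) as [a0 [l [Rl <-]]].
  destruct (separating_hom_list C R A H RR RC PC RA CL (a0 :: map snd l))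
    as [X [psi [CX [Hpsi Sep]]]].
  set (Y := image_set psi H).
  destruct (coset_walk_root_assignment R A H HH RR X psi a0 l Hpsi Rl
              (fun a Ha => Sep a (or_intror Ha))) as [B [RB [beta Hb]]].
  destruct (hnn_wr_hom A H G i t HH HN B X psi (fun y => beta (coset_rep X Y y)) Hpsi)
    as [phi [Hphi [Hpi Hpt]]].
  { intros h x Hh. f_equal. apply coset_rep_mul; [exact (image_set_subgroup A X psi H HH Hpsi)|].
    now exists h. }
  destruct (corestrict_in C G (wr B X) phi Hphi SC (wr_in_class C R B X RR BC CARD RB CX))
    as [Q [q [CQ [Hq [Sq Kq]]]]].
  exists Q, q. repeat split; auto. intros E. apply Kq in E.
  rewrite (hnn_form_wr A G i t B X psi _ phi Hphi Hpi Hpt) in E.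
  destruct l as [|x l'].
  - apply (f_equal snd) in E. cbn in E. rewrite gmul1r in E.
    apply (proj2 (Sep a0 (or_introl eq_refl))); [|exact E].
    intros ->. apply Ng. unfold hnn_form. cbn. now rewrite (hom1 (hnn_i_hom A H G i t HN)), gmul1r.
  - apply Hb; [discriminate|].
    apply (f_equal (fun p => fst p gone)) in E. rewrite wr_eval_fst1 in E.
    etransitivity; [|exact E]. unfold coset_letters.
    now rewrite <- (word_eval_map X X B beta (fun x => coset_rep X Y (ginv x))).
Qed.

Theorem theorem1p7 (C R : gclass) (A : group) (H : A -> Prop) (G : group)
  (i : A -> G) (t : G) :
  is_subgroup A H ->
  is_special_HNN A H G i t ->
  iso_closed C ->
  root_class R ->
  (forall X, R X -> C X) ->
  subgroup_closed C ->
  product_closed C ->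
  (forall X, by_class R C X -> C X) ->
  (forall X, C X -> exists Y, R Y /\ same_card X Y) ->
  (residually C G <-> residually C A /\ pro_closed C A H).
Proof.
  intros HH HN _ RR RC SC PC BC CARD. split.
  - intros RG. split.
    + exact (residually_inj_hom C A G i SC (hnn_i_hom A H G i t HN) (hnn_i_inj A H G i t HN) RG).
    + exact (residually_hnn_closed A H G i t HH HN C SC RG).
  - intros [RA CL]. exact (residually_hnn C R A H G i t HH HN RR RC SC PC BC CARD RA CL).
Qed.
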